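(* Let $q=2^s$, $s\ge1$, and let $C_2\subseteq C_1\subseteq\mathbb F_q^n$ be $\mathbb F_q$-linear codes forming a $q$-ary CSS-$T$ pair. Then the binary code $\mathrm{tr}(C_2)\subseteq\mathbb F_2^n$ is self-orthogonal, i.e. $\mathrm{tr}(C_2)\subseteq\mathrm{tr}(C_2)^\perp$.
   Context: Let $q=2^s$ and $\mathrm{tr}:\mathbb F_q\to\mathbb F_2$, $\mathrm{tr}(x)=\sum_{i=0}^{s-1}x^{2^i}$, the absolute trace; for $c\in\mathbb F_q^n$, $\mathrm{tr}(c)=(\mathrm{tr}(c_1),\dots,\mathrm{tr}(c_n))$, and for a linear code $C$, $\mathrm{tr}(C)=\{\mathrm{tr}(c):c\in C\}\subseteq\mathbb F_2^n$. $^\perp$ is the dual for the standard inner product. Let $\mathcal H=\mathbb C^q$ with orthonormal basis $\{|x\rangle:x\in\mathbb F_q\}$ and $\mathcal H^{\otimes n}$ with basis $|x\rangle=|x_1\rangle\otimes\cdots\otimes|x_n\rangle$, $x\in\mathbb F_q^n$. For $\lambda\in\mathbb F_q$, $T^{(\lambda)}=\sum_{x\in\mathbb F_q}e^{i\pi\,\mathrm{tr}(\lambda x)/4}|x\rangle\langle x|$, where $\mathrm{tr}(\lambda x)\in\{0,1\}$ is regarded as an integer; $T=T^{(1)}$. For $\mathbb F_q$-linear codes $C_2\subseteq C_1\subseteq\mathbb F_q^n$, the CSS code $\mathrm{CSS}(C_1,C_2)\subseteq\mathcal H^{\otimes n}$ is the complex linear span of the states $|w+C_2\rangle=|C_2|^{-1/2}\sum_{c\in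 C_2}|w+c\rangle$ for $w\in C_1$. The pair $(C_1,C_2)$ is a $q$-ary CSS-$T$ pair if $(T^{(\lambda)})^{\otimes n}$ maps $\mathrm{CSS}(C_1,C_2)$ into itself for every $\lambda\in\mathbb F_q$. *)

From HB Require Import structures.
From mathcomp Require Import all_boot all_order all_algebra all_field.
Set Implicit Arguments. Unset Strict Implicit. Unset Printing Implicit Defensive.
Import Order.TTheory GRing.Theory Num.Theory.
Local Open Scope ring_scope.

(* absolute trace F_q -> F_q (lands in the prime field {0,1}), q = 2^s *)
Definition abs_trace (F : finFieldType) (s : nat) (x : F) : F :=
  \sum_(i < s) x ^+ (2 ^ i).

(* tr(x) regarded as an integer in {0,1} *)
Definition trn (F : finFieldType) (s : nat) (x : F) : nat :=
  (abs_trace s x == 1).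

Definition trb (F : finFieldType) (s : nat) (x : F) : 'F_2 := (trn s x)%:R.

Definition tr_vec (F : finFieldType) (s n : nat) (c : 'rV[F]_n) : 'rV['F_2]_n :=
  \row_i trb s (c 0 i).

Definition tr_code (F : finFieldType) (s n : nat) (C : {vspace 'rV[F]_n}) :
  pred 'rV['F_2]_n :=
  [pred b | [exists c : 'rV[F]_n, (c \in C) && (b == tr_vec s c)]].

Definition dual2 (n : nat) (D : pred 'rV['F_2]_n) : pred 'rV['F_2]_n :=
  [pred x : 'rV['F_2]_n | [forall y : 'rV['F_2]_n, (y \in D) ==> (\sum_(i < n) x 0 i * y 0 i == 0)]].

(* e^{i pi/4}: the 4th root of -1 with minimal nonnegative argument *)
Definition omega8 : algC := 4.-root (-1).

(* H^{(x) n} = functions F_q^n -> C, basis kets |x> *)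
Definition ket (F : finFieldType) (n : nat) (x : 'rV[F]_n) : {ffun 'rV[F]_n -> algC} :=
  [ffun y => (y == x)%:R].

Definition css_ket (F : finFieldType) (n : nat) (C2 : {vspace 'rV[F]_n})
  (w : 'rV[F]_n) : {ffun 'rV[F]_n -> algC} :=
  [ffun y => (sqrtC (#|[pred c : 'rV[F]_n | c \in C2]|%:R))^-1 *
    \sum_(c : 'rV[F]_n | c \in C2) ket (w + c) y].

Definition in_CSS (F : finFieldType) (n : nat) (C1 C2 : {vspace 'rV[F]_n})
  (psi : {ffun 'rV[F]_n -> algC}) : Prop :=
  exists a : 'rV[F]_n -> algC,
    psi = [ffun y => \sum_(w : 'rV[F]_n | w \in C1) a w * css_ket C2 w y].

(* (T^(lambda))^{(x) n} acting on H^{(x) n}: diagonal with phase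
   prod_i e^{i pi tr(lambda x_i)/4} on |x> *)
Definition Tn (F : finFieldType) (s n : nat) (lam : F)
  (psi : {ffun 'rV[F]_n -> algC}) : {ffun 'rV[F]_n -> algC} :=
  [ffun x : 'rV[F]_n => (\prod_(i < n) omega8 ^+ trn s (lam * x 0 i)) * psi x].

(* q-ary CSS-T pair (C2 <= C1 assumed separately) *)
Definition css_T_pair (F : finFieldType) (s n : nat) (C1 C2 : {vspace 'rV[F]_n}) : Prop :=
  forall (lam : F) (psi : {ffun 'rV[F]_n -> algC}),
    in_CSS C1 C2 psi -> in_CSS C1 C2 (Tn s lam psi).

From HB Require Import structures.
From mathcomp Require Import all_boot all_order all_algebra all_field.

(* Every state of CSS(C1, C2) is constant on the cosets of C2, and the coset
   state |C2> belongs to it.  Since T^(1) multiplies |x> by omega8^(wt tr(x)),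
   invariance of CSS(C1, C2) applied to |C2> forces omega8^(wt tr(c)) = 1, i.e.
   8 divides wt tr(c) for every c in C2.  The trace is additive and {0,1}-valued,
   so wt tr(c + d) + 2 <tr c, tr d>_Z = wt tr(c) + wt tr(d); with all three
   weights divisible by 4, the integer inner product <tr c, tr d>_Z is even. *)

Set Implicit Arguments. Unset Strict Implicit. Unset Printing Implicit Defensive.
Import GRing.Theory Num.Theory.
Local Open Scope ring_scope.

Section AbsTrace.

Variables (F : finFieldType) (s : nat).
Hypothesis cardF : #|F| = (2 ^ s)%N.

Lemma pchar2_F : 2%N \in [pchar F].
Proof. exact: card_finPcharP cardF (isT : prime 2). Qed.

Lemma expr2nD (x y : F) i : (x + y) ^+ (2 ^ i) = x ^+ (2 ^ i) + y ^+ (2 ^ i).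
Proof.
by apply: exprDn_pchar; rewrite (eq_pnat _ (pcharf_eq pchar2_F)) pnatX pnat_id.
Qed.

Lemma abs_traceD (x y : F) : abs_trace s (x + y) = abs_trace s x + abs_trace s y.
Proof. by rewrite /abs_trace -big_split; apply: eq_bigr => i _; rewrite expr2nD. Qed.

(* Squaring shifts the summands x^(2^i) cyclically, since x^(2^s) = x. *)
Lemma abs_trace_sqr (x : F) : abs_trace s x ^+ 2 = abs_trace s x.
Proof.
have sqr_sum (r : seq 'I_s) (f : 'I_s -> F) :
    (\sum_(i <- r) f i) ^+ 2 = \sum_(i <- r) f i ^+ 2.
  by elim: r => [|i r IHr]; rewrite ?big_nil ?expr0n // !big_cons (expr2nD _ _ 1) IHr.
rewrite /abs_trace sqr_sum; case: s cardF => [|s'] cardF'; first by rewrite !big_ord0.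
rewrite big_ord_recr big_ord_recl /= -exprM -expnSr -cardF' expf_card addrC.
by congr (_ + _); apply: eq_bigr => i _; rewrite -exprM -expnSr.
Qed.

Lemma abs_trace_01 (x : F) : abs_trace s x = 0 \/ abs_trace s x = 1.
Proof.
have : abs_trace s x * (abs_trace s x - 1) = 0.
  by rewrite mulrBr mulr1 -expr2 abs_trace_sqr subrr.
by move/eqP; rewrite mulf_eq0 subr_eq0 => /orP[] /eqP; [left | right].
Qed.

Lemma trnD (x y : F) :
  (trn s (x + y)%R + 2 * (trn s x * trn s y) = trn s x + trn s y)%N.
Proof.
have oneD1 : (1 + 1 : F) = 0 by rewrite -mulr2n (pcharf0 pchar2_F).
have zero_neq1 : (0 : F) != 1 by rewrite eq_sym oner_eq0.
rewrite /trn abs_traceD.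
by case: (abs_trace_01 x) => ->; case: (abs_trace_01 y) => ->;
  rewrite ?addr0 ?add0r ?oneD1 ?eqxx ?(negbTE zero_neq1).
Qed.

End AbsTrace.

Lemma trn0 (F : finFieldType) (s : nat) : trn s (0 : F) = 0%N.
Proof.
rewrite /trn /abs_trace big1 => [|i _]; first by rewrite eq_sym oner_eq0.
by rewrite expr0n expn_eq0.
Qed.

Definition tr_wt (F : finFieldType) (s n : nat) (c : 'rV[F]_n) : nat :=
  \sum_(i < n) trn s (c 0%R i).

Definition tr_dot (F : finFieldType) (s n : nat) (c d : 'rV[F]_n) : nat :=
  \sum_(i < n) trn s (c 0%R i) * trn s (d 0%R i).

Lemma tr_wtD (F : finFieldType) (s n : nat) (c d : 'rV[F]_n) :
  #|F| = (2 ^ s)%N -> (tr_wt s (c + d) + 2 * tr_dot s c d = tr_wt s c + tr_wt s d)%N.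
Proof.
move=> cardF; rewrite /tr_wt /tr_dot big_distrr -!big_split /=.
by apply: eq_bigr => i _; rewrite mxE trnD.
Qed.

Lemma tr_vec_dot (F : finFieldType) (s n : nat) (c d : 'rV[F]_n) :
  \sum_(i < n) tr_vec s c 0 i * tr_vec s d 0 i = (tr_dot s c d)%:R.
Proof. by rewrite natr_sum; apply: eq_bigr => i _; rewrite !mxE natrM. Qed.

Lemma omega8_prim : 8.-primitive_root omega8.
Proof.
have omega8_4 : omega8 ^+ 4 = -1 by apply: rootCK.
have omega8_8 : omega8 ^+ 8 = 1 by rewrite (exprM _ 4 2) omega8_4 sqrrN expr1n.
have [k prim_k k_dvd8] := prim_order_exists (isT : (0 < 8)%N) omega8_8.
suff <- : k = 8%N by [].
have k_ndvd4 : ~~ (k %| 4)%N.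
  rewrite (prim_order_dvd prim_k) omega8_4 eq_sym -subr_eq0 opprK -mulr2n.
  by rewrite pnatr_eq0.
by move: k_dvd8 k_ndvd4; rewrite dvdn_divisors // !inE => /or4P[] /eqP->.
Qed.

Section CSSStates.

Variables (F : finFieldType) (n : nat) (C1 C2 : {vspace 'rV[F]_n}).

Lemma css_ketDr w x y : y \in C2 -> css_ket C2 w (x + y) = css_ket C2 w x.
Proof.
move=> C2y; rewrite !ffunE; congr (_ * _).
rewrite (reindex_inj (addIr y)) /=; apply: eq_big => [c | c _]; first exact: rpredDr.
by rewrite !ffunE addrA (inj_eq (addIr y)).
Qed.

Lemma in_CSSDr psi x y : in_CSS C1 C2 psi -> y \in C2 -> psi (x + y) = psi x.
Proof.
by case=> a -> C2y; rewrite !ffunE; apply: eq_bigr => w _; rewrite css_ketDr.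
Qed.

Lemma css_ket0_in_CSS : in_CSS C1 C2 (css_ket C2 0).
Proof.
exists (fun w => (w == 0)%:R); apply/ffunP => y; rewrite [RHS]ffunE (bigD1 0) ?mem0v //=.
by rewrite eqxx mul1r big1 ?addr0 // => w /andP[_ /negbTE->]; rewrite mul0r.
Qed.

Lemma css_ket00_neq0 : css_ket C2 0 0 != 0.
Proof.
rewrite ffunE (bigD1 0) ?mem0v //= big1 => [|c /andP[_ c_neq0]]; last first.
  by rewrite ffunE add0r eq_sym (negbTE c_neq0).
rewrite ffunE !addr0 eqxx mulr1 invr_eq0 sqrtC_eq0 pnatr_eq0 -lt0n.
by apply/card_gt0P; exists 0; rewrite inE mem0v.
Qed.

End CSSStates.

Lemma Tn1E (F : finFieldType) (s n : nat) (psi : {ffun 'rV[F]_n -> algC}) x :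
  Tn s 1 psi x = omega8 ^+ tr_wt s x * psi x.
Proof.
by rewrite ffunE prodrXr; under eq_bigr => i _ do rewrite mul1r.
Qed.

Lemma css_T_tr_wt (F : finFieldType) (s n : nat) (C1 C2 : {vspace 'rV[F]_n}) c :
  css_T_pair s C1 C2 -> c \in C2 -> (8 %| tr_wt s c)%N.
Proof.
move=> cssT C2c; set psi := css_ket C2 0.
have psi_in : in_CSS C1 C2 psi := css_ket0_in_CSS C1 C2.
have Tpsi_c : Tn s 1 psi (0 + c) = Tn s 1 psi 0 := in_CSSDr 0 (cssT 1 psi psi_in) C2c.
have psi_c : psi (0 + c) = psi 0 := in_CSSDr 0 psi_in C2c.
have tr_wt0 : tr_wt s (0 : 'rV[F]_n) = 0%N.
  by rewrite /tr_wt big1 // => i _; rewrite mxE trn0.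
move: Tpsi_c; rewrite !Tn1E psi_c tr_wt0 expr0 add0r => /(mulIf (css_ket00_neq0 C2)).
by rewrite (prim_order_dvd omega8_prim) => ->.
Qed.

Lemma css_T_tr_dot_even (F : finFieldType) (s n : nat) (C1 C2 : {vspace 'rV[F]_n}) c d :
  #|F| = (2 ^ s)%N -> css_T_pair s C1 C2 -> c \in C2 -> d \in C2 ->
  (2 %| tr_dot s c d)%N.
Proof.
move=> cardF cssT C2c C2d.
have wt4 e : e \in C2 -> (4 %| tr_wt s e)%N.
  by move=> /(css_T_tr_wt cssT); apply: dvdn_trans.
rewrite -(dvdn_pmul2l (isT : (0 < 2)%N)) -(dvdn_addr _ (wt4 _ (memvD C2c C2d))).
by rewrite tr_wtD // dvdn_add ?wt4.
Qed.

Theorem mainTheorem6 (F : finFieldType) (s n : nat) (C1 C2 : {vspace 'rV[F]_n}) :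
  (0 < s)%N -> #|F| = (2 ^ s)%N -> (C2 <= C1)%VS -> css_T_pair s C1 C2 ->
  forall b : 'rV['F_2]_n, b \in tr_code s C2 -> b \in dual2 (tr_code s C2).
Proof.
move=> _ cardF _ cssT _ /existsP[c /andP[C2c /eqP->]].
apply/forallP => y; apply/implyP => /existsP[d /andP[C2d /eqP->]].
rewrite tr_vec_dot; have /dvdnP[k ->] := css_T_tr_dot_even cardF cssT C2c C2d.
by rewrite natrM (pcharf0 (pchar_Fp (isT : prime 2))) mulr0.
Qed.
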